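(* Let $R$ be a commutative ring with $1$ and $M$ a finitely generated flat $R$-module. Then the annihilator $\operatorname{Ann}_R(M)$ is a pure ideal of $R$.
   Context: An ideal $I$ of a commutative ring $R$ is called pure if the canonical ring map $R\to R/I$ is flat, i.e. $R/I$ is a flat $R$-module. *)

From HB Require Import structures.
From mathcomp Require Import all_boot all_order all_algebra.
From mathcomp Require Import generic_quotient ring_quotient.
From Stdlib Require Import ClassicalEpsilon.

Set Implicit Arguments.
Unset Strict Implicit.
Unset Printing Implicit Defensive.

Import GRing.Theory.
Local Open Scope ring_scope.
Local Open Scope quotient_scope.

Definition pbool (P : Prop) : bool :=
  if excluded_middle_informative P then true else false.

Lemma pboolP (P : Prop) : reflect P (pbool P).
Proof. by rewrite /pbool; case: excluded_middle_informative => h; constructor. Qed.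

Section Modules.
Variable R : comPzRingType.

Definition bilinear_map (N M P : lmodType R) (b : N -> M -> P) : Prop :=
  (forall (a : R) (n1 n2 : N) (m : M), b (a *: n1 + n2) m = a *: b n1 m + b n2 m) /\
  (forall (a : R) (n : N) (m1 m2 : M), b n (a *: m1 + m2) = a *: b n m1 + b n m2).

(* The element sum_i n_i (x) m_i of the tensor product N (x)_R M, given by the
   list s = [:: (n_1, m_1); ...], is zero.  The tensor product is described by
   its universal property: an element of N (x) M vanishes iff every R-bilinear
   map out of N x M sends it to zero.  Every element of N (x) M is such a sum. *)
Definition tensor_zero (N M : lmodType R) (s : seq (N * M)) : Prop :=
  forall (P : lmodType R) (b : N -> M -> P), bilinear_map b ->
    \sum_(x <- s) b x.1 x.2 = 0.

(* M is flat: for every injective R-linear map f : N -> N', the induced map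
   f (x) id_M : N (x) M -> N' (x) M is injective (i.e. has zero kernel). *)
Definition flat (M : lmodType R) : Prop :=
  forall (N N' : lmodType R) (f : {linear N -> N'}), injective f ->
  forall s : seq (N * M),
    tensor_zero [seq (f x.1, x.2) | x <- s] -> tensor_zero s.

Definition finitely_generated (M : lmodType R) : Prop :=
  exists gens : seq M, forall m : M,
    exists c : seq R, m = \sum_(i < size gens) c`_i *: gens`_i.

Definition ann (M : lmodType R) : {pred R} :=
  fun r => pbool (forall m : M, r *: m = 0).

Lemma ann_zmod_closed (M : lmodType R) : zmod_closed (ann M).
Proof.
split; first by apply/pboolP => m; rewrite scale0r.
move=> x y /pboolP hx /pboolP hy; apply/pboolP => m.
by rewrite scalerBl hx hy subr0.
Qed.

Lemma ann_mul_closed (M : lmodType R) a x : x \in ann M -> a * x \in ann M.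
Proof.
move=> /pboolP hx; apply/pboolP => m.
by rewrite -scalerA hx scaler0.
Qed.

End Modules.

HB.instance Definition _ (R : comPzRingType) (M : lmodType R) :=
  GRing.isZmodClosed.Build R (ann M) (ann_zmod_closed M).

Section QuotMod.
Variables (R : comPzRingType) (I : zmodClosed R).
Hypothesis hI : forall a x, x \in I -> a * x \in I.

Local Notation Q0 := (Quotient.quot I).

Definition qscale (a : R) (x : Q0) : Q0 := \pi_Q0 (a * repr x).

Lemma qscale_pi a y : qscale a (\pi_Q0 y) = \pi_Q0 (a * y).
Proof.
rewrite /qscale; apply/eqmodP => /=; rewrite Quotient.equivE -mulrBr.
by apply: hI; rewrite Quotient.idealrBE reprK.
Qed.

Lemma qscalerA a b v : qscale a (qscale b v) = qscale (a * b) v.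
Proof. move: v; apply: quotW. intros y. by rewrite (qscale_pi b) (qscale_pi a) (qscale_pi (a * b)) mulrA. Qed.

Lemma qscale1r : left_id 1 qscale.
Proof. apply: quotW. intros y. by rewrite qscale_pi mul1r. Qed.

Lemma qscalerDr : right_distributive qscale +%R.
Proof.
move=> a; apply: quotW. intros u. apply: quotW. intros v.
have pD := raddfD (\pi_Q0).
by rewrite -pD !qscale_pi mulrDr pD.
Qed.

Lemma qscalerDl v : {morph qscale^~ v : a b / a + b}.
Proof.
move=> a b; move: v; apply: quotW. intros v.
by rewrite !qscale_pi mulrDl Quotient.pi_add.
Qed.

Definition quot_mod of (forall a x, x \in I -> a * x \in I) := Q0.

HB.instance Definition _ := GRing.Zmodule.on (quot_mod hI).
HB.instance Definition _ := GRing.Zmodule_isLmodule.Build R (quot_mod hI)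
  qscalerA qscale1r qscalerDr qscalerDl.
End QuotMod.

Definition pure_ideal (R : comPzRingType) (I : zmodClosed R)
  (hI : forall a x, x \in I -> a * x \in I) : Prop :=
  flat (quot_mod hI).

From HB Require Import structures.
From mathcomp Require Import all_boot all_order all_algebra.
From mathcomp Require Import generic_quotient ring_quotient.
From mathcomp Require Import ring.

(* For a in Ann(M), flatness of M applied to the injection R/(0:a) -> R,
   r |-> a r, shows that a x = 0 forces x in (0:a)M; as a kills M, this gives
   M = (0:a)M, and Nakayama's lemma for the finitely generated M yields
   j in (0:a) with (1 - j)M = 0.  Thus b = 1 - j lies in Ann(M) and a b = a.
   Any ideal I in which every a has such a b in I is pure: N (x) R/I is
   N/IN, so flatness of R/I says that f n in IN' forces n in IN for an
   injective f : N -> N'; and if f n in IN' there is c in I with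
   c f n = f n, whence n = c n in IN. *)

Set Implicit Arguments.
Unset Strict Implicit.
Unset Printing Implicit Defensive.
Import GRing.Theory.
Local Open Scope ring_scope.
Local Open Scope quotient_scope.

Section QuotientModule.
Variables (R : comPzRingType) (V : lmodType R) (S : zmodClosed V).
Hypothesis scaleS : forall (a : R) (v : V), v \in S -> a *: v \in S.

Local Notation Q := (Quotient.quot S).

Definition lmod_scale (a : R) (x : Q) : Q := \pi_Q (a *: repr x).

Lemma lmod_scale_pi a v : lmod_scale a (\pi_Q v) = \pi_Q (a *: v).
Proof.
rewrite /lmod_scale; apply/eqmodP => /=; rewrite Quotient.equivE -scalerBr.
by apply: scaleS; rewrite Quotient.idealrBE reprK.
Qed.

Lemma lmod_scalerA a b x : lmod_scale a (lmod_scale b x) = lmod_scale (a * b) x.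
Proof. by move: x; apply: quotW => v; rewrite (lmod_scale_pi b) !lmod_scale_pi scalerA. Qed.

Lemma lmod_scale1r : left_id 1 lmod_scale.
Proof. by apply: quotW => v; rewrite lmod_scale_pi scale1r. Qed.

Lemma lmod_scalerDr : right_distributive lmod_scale +%R.
Proof.
move=> a; apply: quotW => u; apply: quotW => v.
by rewrite -raddfD !lmod_scale_pi scalerDr raddfD.
Qed.

Lemma lmod_scalerDl x : {morph lmod_scale^~ x : a b / a + b}.
Proof. by move=> a b; move: x; apply: quotW => v; rewrite !lmod_scale_pi scalerDl raddfD. Qed.

Definition lmod_quot of (forall (a : R) (v : V), v \in S -> a *: v \in S) := Q.

HB.instance Definition _ := GRing.Zmodule.on (lmod_quot scaleS).
HB.instance Definition _ := GRing.Zmodule_isLmodule.Build R (lmod_quot scaleS)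
  lmod_scalerA lmod_scale1r lmod_scalerDr lmod_scalerDl.

Definition lmod_pi (v : V) : lmod_quot scaleS := \pi_Q v.

Lemma lmod_piD u v : lmod_pi (u + v) = lmod_pi u + lmod_pi v.
Proof. exact: raddfD. Qed.

Lemma lmod_piZ a v : lmod_pi (a *: v) = a *: lmod_pi v.
Proof. by rewrite /lmod_pi -lmod_scale_pi. Qed.

Lemma lmod_pi_eq u v : (lmod_pi u == lmod_pi v) = (u - v \in S).
Proof. by rewrite Quotient.idealrBE. Qed.

Lemma lmod_pi_eq0 v : (lmod_pi v == 0) = (v \in S).
Proof. by rewrite -(raddf0 \pi_Q) -[v in RHS]subr0 -lmod_pi_eq. Qed.

End QuotientModule.

Section IdealSmul.
Variables (R : comPzRingType) (V : lmodType R).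

Definition ideal_smul (J : {pred R}) : {pred V} := fun x =>
  pbool (exists2 s : seq (R * V),
    all (fun p => p.1 \in J) s & x = \sum_(p <- s) p.1 *: p.2).

Lemma ideal_smul_zmod (J : zmodClosed R) : zmod_closed (ideal_smul J).
Proof.
split; first by apply/pboolP; exists [::]; rewrite ?big_nil.
move=> x y /pboolP [s sJ ->] /pboolP [t tJ ->]; apply/pboolP.
exists (s ++ [seq (- p.1, p.2) | p <- t]).
  by rewrite all_cat sJ all_map; apply/allP => p /(allP tJ) /= pJ; rewrite rpredN.
by rewrite big_cat big_map -sumrN; congr (_ + _); apply: eq_bigr => p _; rewrite scaleNr.
Qed.

HB.instance Definition _ (J : zmodClosed R) :=
  GRing.isZmodClosed.Build V (ideal_smul J) (ideal_smul_zmod J).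

Lemma ideal_smul_scale (J : {pred R}) c v : c \in J -> c *: v \in ideal_smul J.
Proof. by move=> cJ; apply/pboolP; exists [:: (c, v)]; rewrite /= ?cJ ?big_seq1. Qed.

Lemma ideal_smulZ (J : zmodClosed R) (idealJ : forall a x, x \in J -> a * x \in J) a x :
  x \in ideal_smul J -> a *: x \in ideal_smul J.
Proof.
move=> /pboolP [s sJ ->]; apply/pboolP; exists [seq (a * p.1, p.2) | p <- s].
  by rewrite all_map; apply/allP => p /(allP sJ) /= pJ; apply: idealJ.
by rewrite big_map scaler_sumr; apply: eq_bigr => p _; rewrite scalerA.
Qed.

End IdealSmul.

Section Bilinear.
Variables (R : comPzRingType) (N M P : lmodType R) (b : N -> M -> P).
Hypothesis bilin_b : bilinear_map b.

Lemma bilinear0l m : b 0 m = 0.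
Proof.
have := bilin_b.1 1 0 0 m; rewrite !scale1r addr0 => e.
by apply: (@addrI _ (b 0 m)); rewrite addr0 -e.
Qed.

Lemma bilinear0r n : b n 0 = 0.
Proof.
have := bilin_b.2 1 n 0 0; rewrite !scale1r addr0 => e.
by apply: (@addrI _ (b n 0)); rewrite addr0 -e.
Qed.

Lemma bilinearDl n1 n2 m : b (n1 + n2) m = b n1 m + b n2 m.
Proof. by have := bilin_b.1 1 n1 n2 m; rewrite !scale1r. Qed.

Lemma bilinearZl a n m : b (a *: n) m = a *: b n m.
Proof. by rewrite -[a *: n]addr0 bilin_b.1 bilinear0l addr0. Qed.

Lemma bilinearZr a n m : b n (a *: m) = a *: b n m.
Proof. by rewrite -[a *: m]addr0 bilin_b.2 bilinear0r addr0. Qed.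

Lemma bilinear_flip : bilinear_map (fun m n => b n m).
Proof. by split=> *; rewrite ?bilin_b.1 ?bilin_b.2. Qed.

End Bilinear.

Lemma tensor_zero_flip (R : comPzRingType) (N M : lmodType R) (s : seq (N * M)) :
  tensor_zero s -> tensor_zero [seq (x.2, x.1) | x <- s].
Proof. by move=> s0 P b bilin_b; rewrite big_map; exact: s0 _ _ (bilinear_flip bilin_b). Qed.

Section QuotientRing.
Variables (R : comPzRingType) (J : zmodClosed R).
Hypothesis idealJ : forall a x, x \in J -> a * x \in J.

Definition qpi (r : R) : quot_mod idealJ := \pi_(Quotient.quot J) r.
Definition qrep (q : quot_mod idealJ) : R := repr (q : Quotient.quot J).

Lemma qpi_repr q : qpi (qrep q) = q.
Proof. exact: reprK. Qed.

Lemma qind (P : quot_mod idealJ -> Prop) : (forall r, P (qpi r)) -> forall q, P q.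
Proof. by move=> Pqpi q; rewrite -(qpi_repr q). Qed.

Lemma qpiD x y : qpi (x + y) = qpi x + qpi y.
Proof. exact: Quotient.pi_add. Qed.

Lemma qpiZ c r : c *: qpi r = qpi (c * r).
Proof. exact: qscale_pi. Qed.

Lemma qpi_eq x y : (qpi x == qpi y) = (x - y \in J).
Proof. by rewrite Quotient.idealrBE. Qed.

Lemma qpi0 r : r \in J -> qpi r = 0.
Proof. by move=> rJ; apply/eqP; rewrite -(raddf0 \pi_(Quotient.quot J)) qpi_eq subr0. Qed.

Lemma qrep_qpi r : qrep (qpi r) - r \in J.
Proof. by rewrite -qpi_eq qpi_repr. Qed.

Variable N : lmodType R.

Local Notation smulJ := (@ideal_smulZ R N J idealJ).

Definition tensor_quot (v : N) (q : quot_mod idealJ) : lmod_quot smulJ :=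
  lmod_pi smulJ (qrep q *: v).

Lemma tensor_quot_qpi v r : tensor_quot v (qpi r) = lmod_pi smulJ (r *: v).
Proof. by apply/eqP; rewrite lmod_pi_eq -scalerBl ideal_smul_scale ?qrep_qpi. Qed.

Lemma tensor_quot_bilinear : bilinear_map tensor_quot.
Proof.
split=> [a v1 v2 q | a v].
  by rewrite /tensor_quot scalerDr scalerA mulrC -scalerA lmod_piD lmod_piZ.
elim/qind => r1; elim/qind => r2.
by rewrite qpiZ -qpiD !tensor_quot_qpi scalerDl -scalerA lmod_piD lmod_piZ.
Qed.

Lemma bilinear_sum_quot (P : lmodType R) (b : N -> quot_mod idealJ -> P) :
  bilinear_map b -> forall s : seq (N * quot_mod idealJ),
  \sum_(x <- s) b x.1 x.2 = b (\sum_(x <- s) qrep x.2 *: x.1) (qpi 1).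
Proof.
move=> bilin_b; elim=> [|x s IH]; first by rewrite !big_nil bilinear0l.
by rewrite !big_cons IH bilinearDl // bilinearZl // -bilinearZr // qpiZ mulr1 qpi_repr.
Qed.

Lemma tensor_zero_quot1 (n : N) : tensor_zero [:: (n, qpi 1)] <-> n \in ideal_smul J.
Proof.
split=> [/(_ _ _ tensor_quot_bilinear) | /pboolP [t tJ ->] P b bilin_b].
  by rewrite big_seq1 tensor_quot_qpi scale1r => /eqP; rewrite lmod_pi_eq0.
rewrite big_seq1 /=; elim: t tJ => [|[a v] t IH /= /andP [aJ tJ]].
  by rewrite big_nil bilinear0l.
rewrite big_cons bilinearDl // IH // addr0 /= bilinearZl // -bilinearZr //.
by rewrite qpiZ mulr1 qpi0 // bilinear0r.
Qed.

Lemma tensor_zero_quot (s : seq (N * quot_mod idealJ)) :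
  tensor_zero s <-> \sum_(x <- s) qrep x.2 *: x.1 \in ideal_smul J.
Proof.
rewrite -tensor_zero_quot1; split=> s0 P b bilin_b.
  by rewrite big_seq1 /= -(bilinear_sum_quot bilin_b); apply: s0.
by rewrite bilinear_sum_quot //; have := s0 P b bilin_b; rewrite big_seq1.
Qed.

End QuotientRing.

Section LocalUnits.
Variables (R : comPzRingType) (I : zmodClosed R).
Hypothesis idealI : forall a x, x \in I -> a * x \in I.
Hypothesis local_unit : forall a, a \in I -> exists2 b, b \in I & a * b = a.

Lemma ideal_smul_local_unit (V : lmodType R) (v : V) :
  v \in ideal_smul I -> exists2 c, c \in I & c *: v = v.
Proof.
move=> /pboolP [t + ->]; elim: t => [_|[a w] t IH /= /andP [aI tI]].
  by exists 0; rewrite ?rpred0 // big_nil scaler0.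
have [b bI ab] := local_unit aI; have [c cI ct] := IH tI.
exists (b + c - b * c); first by rewrite rpredB ?rpredD // idealI.
have ac : (b + c - b * c) * a = a by rewrite mulrC !mulrDr mulrN mulrA ab; ring.
have ct' : (b + c - b * c) *: \sum_(p <- t) p.1 *: p.2 = \sum_(p <- t) p.1 *: p.2.
  by rewrite scalerBl !scalerDl -scalerA ct addrAC subrr add0r.
by rewrite big_cons scalerDr scalerA ac ct'.
Qed.

Lemma pure_ideal_local_units : pure_ideal idealI.
Proof.
move=> N N' f f_inj s; rewrite !tensor_zero_quot big_map /=.
set n := \sum_(x <- s) qrep x.2 *: x.1.
have -> : \sum_(x <- s) qrep x.2 *: f x.1 = f n.
  by rewrite linear_sum; apply: eq_bigr => x _; rewrite linearZ.
case/ideal_smul_local_unit => c cI cfn.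
have <- : c *: n = n by apply: f_inj; rewrite linearZ.
exact: ideal_smul_scale.
Qed.

End LocalUnits.

Section Nakayama.
Variables (R : comPzRingType) (M : lmodType R).

Definition in_span (t : seq M) (x : M) : Prop :=
  exists c : nat -> R, x = \sum_(i < size t) c i *: t`_i.

Variable J : zmodClosed R.
Hypothesis idealJ : forall a x, x \in J -> a * x \in J.

Lemma scale_ideal_smul_span t u x : (forall m, in_span t (u *: m)) ->
  x \in ideal_smul J ->
  exists2 c : nat -> R, (forall i, c i \in J) & u *: x = \sum_(i < size t) c i *: t`_i.
Proof.
move=> span_u /pboolP [s + ->]; elim: s => [_|p s IH /= /andP [pJ sJ]].
  exists (fun _ => 0) => [i|]; first exact: rpred0.
  by rewrite big_nil scaler0 big1 // => i _; rewrite scale0r.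
rewrite big_cons scalerDr scalerA mulrC -scalerA.
have [c cJ ->] := IH sJ; have [d ->] := span_u p.2.
exists (fun i => p.1 * d i + c i) => [i|]; first by rewrite rpredD // mulrC idealJ.
by rewrite scaler_sumr -big_split /=; apply: eq_bigr => i _; rewrite scalerA scalerDl.
Qed.

Hypothesis JM_full : forall m : M, m \in ideal_smul J.

Lemma nakayama_span t u : 1 - u \in J -> (forall m, in_span t (u *: m)) ->
  exists2 j, j \in J & forall m : M, (1 - j) *: m = 0.
Proof.
elim: t u => [|y t IH] u uJ span_u.
  by exists (1 - u) => // m; rewrite subKr; have [c ->] := span_u m; rewrite big_ord0.
have [c cJ] := scale_ideal_smul_span span_u (JM_full y).
rewrite big_ord_recl /= => uy; set e := c 0%N in uy.
(* (u - e) y is a combination of t alone, so (u - e) u maps M into the span of t. *)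
have uey : (u - e) *: y = \sum_(i < size t) c i.+1 *: t`_i.
  by rewrite scalerBl uy addrC addKr.
apply: (IH ((u - e) * u)).
  have -> : 1 - (u - e) * u = (1 - u) + u * (1 - u) + u * e by ring.
  by apply: rpredD; [apply: rpredD => //; apply: idealJ | apply: idealJ; apply: cJ].
move=> m; have [d] := span_u m; rewrite big_ord_recl /= => um.
exists (fun i => d 0%N * c i.+1 + (u - e) * d i.+1).
rewrite -scalerA um scalerDr scalerA mulrC -scalerA uey !scaler_sumr -big_split /=.
by apply: eq_bigr => i _; rewrite !scalerA scalerDl.
Qed.

Lemma nakayama : finitely_generated M ->
  exists2 j, j \in J & forall m : M, (1 - j) *: m = 0.
Proof.
case=> gens gensP; apply: (@nakayama_span gens 1); first by rewrite subrr rpred0.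
by move=> m; rewrite scale1r; have [c ->] := gensP m; exists (fun i => c`_i).
Qed.

End Nakayama.

Section AnnihilatorElement.
Variables (R : comPzRingType) (a : R).

Definition ann_elem : {pred R} := fun r => a * r == 0.

Lemma ann_elemE r : (r \in ann_elem) = (a * r == 0).
Proof. by []. Qed.

Lemma ann_elem_zmod : zmod_closed ann_elem.
Proof.
split=> [|x y]; rewrite !ann_elemE ?mulr0 //.
by move=> /eqP ax /eqP ay; rewrite mulrBr ax ay subr0.
Qed.

HB.instance Definition _ := GRing.isZmodClosed.Build R ann_elem ann_elem_zmod.

Lemma ann_elem_ideal c x : x \in ann_elem -> c * x \in ann_elem.
Proof. by rewrite !ann_elemE mulrCA => /eqP ->; rewrite mulr0. Qed.

Definition mul_ann_quot (q : quot_mod ann_elem_ideal) : R^o := a * qrep q.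

Lemma mul_ann_quot_qpi r : mul_ann_quot (qpi ann_elem_ideal r) = a * r.
Proof. by apply/eqP; rewrite -subr_eq0 -mulrBr -ann_elemE qrep_qpi. Qed.

Lemma mul_ann_quot_linear : linear mul_ann_quot.
Proof.
move=> c; elim/qind => r1; elim/qind => r2.
by rewrite qpiZ -qpiD !mul_ann_quot_qpi mulrDr mulrCA.
Qed.

HB.instance Definition _ :=
  GRing.isLinear.Build R (quot_mod ann_elem_ideal) R^o _ mul_ann_quot mul_ann_quot_linear.

Lemma mul_ann_quot_inj : injective mul_ann_quot.
Proof.
elim/qind => r1; elim/qind => r2; rewrite !mul_ann_quot_qpi => e.
by apply/eqP; rewrite qpi_eq ann_elemE mulrBr e subrr.
Qed.

Lemma flat_scale_eq0 (M : lmodType R) (x : M) :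
  flat M -> a *: x = 0 -> x \in ideal_smul ann_elem.
Proof.
move=> flatM ax0.
have ax_tensor0 : tensor_zero
    [seq ((mul_ann_quot : {linear _ -> _}) y.1, y.2) | y <- [:: (qpi ann_elem_ideal 1, x)]].
  move=> P b bilin_b; rewrite big_map big_seq1 /= mul_ann_quot_qpi.
  by rewrite -[a * 1]/(a *: (1 : R^o)) bilinearZl // -bilinearZr // ax0 bilinear0r.
have /tensor_zero_flip := flatM _ _ _ mul_ann_quot_inj _ ax_tensor0.
by move=> /= /tensor_zero_quot1.
Qed.

End AnnihilatorElement.

Lemma ann_local_unit (R : comPzRingType) (M : lmodType R) :
  finitely_generated M -> flat M ->
  forall a, a \in ann M -> exists2 b, b \in ann M & a * b = a.
Proof.
move=> fgM flatM a /pboolP aM.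
have [j] := nakayama (@ann_elem_ideal R a) (fun m => flat_scale_eq0 flatM (aM m)) fgM.
rewrite ann_elemE => /eqP aj jM.
by exists (1 - j); [apply/pboolP | rewrite mulrBr mulr1 aj subr0].
Qed.

Theorem corollary2p3 (R : comPzRingType) (M : lmodType R)
  (hfg : finitely_generated M) (hflat : flat M) :
  pure_ideal (@ann_mul_closed R M).
Proof. exact/pure_ideal_local_units/ann_local_unit. Qed.
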